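(* Let $N$ be a stepwise NFTA and $h$ the homomorphism from the free forest algebra over $\Sigma$ to the transition algebra $\mathcal{F}_N$ determined by $h(a_\Box)=\{\mathrm{SIG}(\lambda)\mid\lambda\text{ is a valid run of }N\text{ on }a_\Box\}$ for all $a\in\Sigma$. Then for every nonempty forest or context $D$ over $\Sigma$, $h(D)=\{\mathrm{SIG}(\lambda)\mid\lambda\text{ is a valid run of }N\text{ on }D\}$.
   Context: A stepwise NFTA is $N=(Q,\Sigma,\delta,\mathsf{Init},q_0,q_F)$, $\delta\subseteq Q^3$, transition $(q_1,q_2,q_3)$ written $q_1\xrightarrow{q_2}q_3$. A run on a forest $F$ assigns to each node $v$ a transition $\lambda_{\mathsf{pre}}(v)\xrightarrow{\lambda_{\mathsf{self}}(v)}\lambda_{\mathsf{post}}(v)\in\delta$ such that: $\lambda_{\mathsf{pre}}(v)\in\mathsf{Init}(\mathrm{lab}(\mathrm{parent}(v)))$ if $v$ is a non-root first child; $\lambda_{\mathsf{pre}}(v)=\lambda_{\mathsf{post}}(w)$ if $w$ is the left sibling of $v$ (including consecutive roots); $\lambda_{\mathsf{self}}(v)\in\mathsf{Init}(\mathrm{lab}(v))$ if $v$ is a leaf; $\lambda_{\mathsf{self}}(v)=\lambda_{\mathsf{post}}(w)$ if $w$ is the last child of $v$; $\lambda_{\mathsf{pre}}$ of the leftmost root is arbitrary. Runs on a context are defined the same way for the extended automaton with a fresh state $q_\Box$, $\mathsf{Init}(\Box)=\{q_\Box\}$ for the hole $\Box$, and additional transitions $(Q\setminus\{q_\Box\})\times\{q_\Box\}\times(Q\setminus\{q_\Box\})$.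 For a run with roots $v_1\le\dots\le v_k$, $\mathrm{SIG}(\lambda)=(\lambda_{\mathsf{pre}}(v_1),\lambda_{\mathsf{post}}(v_k))$ for a forest and $((\lambda_{\mathsf{pre}}(v_1),\lambda_{\mathsf{post}}(v_k)),(\lambda_{\mathsf{pre}}(\Box),\lambda_{\mathsf{post}}(\Box)))$ for a context. $a_\Box$ denotes the context consisting of an $a$-labelled root whose only child is the hole. The transition algebra $\mathcal{F}_N$ has forest elements $2^{Q^2}$, context elements $2^{(Q^2)^2}$, neutral elements $\mathrm{id}_Q$, $\mathrm{id}_{Q^2}$, and operations: $F_1\oplus F_2=\{(q_1,q_3)\mid(q_1,q_2)\in F_1,(q_2,q_3)\in F_2\}$; $C_1\odot C_2=\{((q_1,q_2),(q_5,q_6))\mid((q_1,q_2),(q_3,q_4))\in C_1,((q_3,q_4),(q_5,q_6))\in C_2\}$; $C\odot F=\{(q_1,q_2)\mid((q_1,q_2),(q_3,q_4))\in C,(q_3,q_4)\in F\}$; $F\oplus C=\{((q_1,q_3),(q_4,q_5))\mid(q_1,q_2)\in F,((q_2,q_3),(q_4,q_5))\in C\}$; $C\oplus F=\{((q_1,q_5),(q_3,q_4))\mid((q_1,q_2),(q_3,q_4))\in C,(q_2,q_5)\in F\}$. The free forest algebra consists of all forests and contexts over $\Sigma$ with concatenation and context application (substituting for the hole); a homomorphism preserves all these operations and neutral elements, and is determined by its values on the contexts $a_\Box$. *)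

From mathcomp Require Import all_boot.
Set Implicit Arguments. Unset Strict Implicit. Unset Printing Implicit Defensive.

Inductive tree (A : Type) : Type := Node of A & seq (tree A).
Arguments Node {A}.

Definition label {A} (t : tree A) : A := let: Node x _ := t in x.

Fixpoint tmap {A B} (f : A -> B) (t : tree A) : tree B :=
  let: Node x ch := t in Node (f x) (map (tmap f) ch).

Fixpoint tnodes {A} (t : tree A) : seq A :=
  let: Node x ch := t in x :: flatten (map tnodes ch).

Definition forest (Sigma : Type) := seq (tree Sigma).

(* Contexts: forests with exactly one hole, the hole being a leaf.
   A context is  L ++ [t] ++ R  where t is either the hole or a node
   a(C) whose children form a context C. *)
Inductive ctx (Sigma : Type) : Type :=
  | Ctx of forest Sigma & ctree Sigma & forest Sigma
with ctree (Sigma : Type) : Type :=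
  | Hole
  | CNode of Sigma & ctx Sigma.
Arguments Ctx {Sigma}.
Arguments Hole {Sigma}.
Arguments CNode {Sigma}.

Definition a_box {Sigma} (a : Sigma) : ctx Sigma :=
  Ctx [::] (CNode a (Ctx [::] Hole [::])) [::].

Definition hole_ctx {Sigma} : ctx Sigma := Ctx [::] Hole [::].

Fixpoint capp {Sigma} (C : ctx Sigma) (F : forest Sigma) : forest Sigma :=
  let: Ctx L t R := C in L ++ ctree_app t F ++ R
with ctree_app {Sigma} (t : ctree Sigma) (F : forest Sigma) : forest Sigma :=
  match t with
  | Hole => F
  | CNode a C => [:: Node a (capp C F)]
  end.

Definition fctx {Sigma} (F : forest Sigma) (C : ctx Sigma) : ctx Sigma :=
  let: Ctx L t R := C in Ctx (F ++ L) t R.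
Definition ctxf {Sigma} (C : ctx Sigma) (F : forest Sigma) : ctx Sigma :=
  let: Ctx L t R := C in Ctx L t (R ++ F).

Fixpoint ccomp {Sigma} (C1 C2 : ctx Sigma) : ctx Sigma :=
  let: Ctx L t R := C1 in
  match t with
  | Hole => ctxf (fctx L C2) R
  | CNode a C => Ctx L (CNode a (ccomp C C2)) R
  end.

(* view a context as a forest over Sigma + {hole}; the hole is a None leaf *)
Fixpoint ctx_forest {Sigma} (C : ctx Sigma) : forest (option Sigma) :=
  let: Ctx L t R := C in
  map (tmap Some) L ++ ctree_forest t ++ map (tmap Some) R
with ctree_forest {Sigma} (t : ctree Sigma) : forest (option Sigma) :=
  match t with
  | Hole => [:: Node None [::]]
  | CNode a C => [:: Node (Some a) (ctx_forest C)]
  end.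

Record nfta (Q Sigma : finType) := NFTA {
  delta : {set Q * Q * Q};   (* (q1,q2,q3) written q1 -q2-> q3 *)
  Init  : Sigma -> {set Q};
  q0    : Q;
  qF    : Q }.

(* A run is the forest decorated at every node with a transition
   (pre, self, post). *)
Section Runs.
Variables (X : Type) (S : eqType).
Variable dlt : S -> S -> S -> bool.
Variable ini : X -> S -> bool.

Definition tpre  (t : tree (X * (S * S * S))) : S := (label t).2.1.1.
Definition tself (t : tree (X * (S * S * S))) : S := (label t).2.1.2.
Definition tpost (t : tree (X * (S * S * S))) : S := (label t).2.2.

Definition sib_chain (l : seq (tree (X * (S * S * S)))) : bool :=
  sorted (fun t1 t2 => tpost t1 == tpre t2) l.

Fixpoint valid_tree (t : tree (X * (S * S * S))) : bool :=
  let: Node (x, (p, s, q)) ch := t in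
  [&& dlt p s q,
      (if ch is c :: ch' then ini x (tpre c) && (s == tpost (last c ch'))
       else ini x s),
      sib_chain ch
    & all valid_tree ch].

(* G is a valid run on the forest F (the pre of the leftmost root is arbitrary) *)
Definition is_run (F : forest X) (G : seq (tree (X * (S * S * S)))) : Prop :=
  map (tmap fst) G = F /\ sib_chain G /\ all valid_tree G.
End Runs.

Section Automaton.
Variables (Q Sigma : finType) (N : nfta Q Sigma).

Definition N_delta (p s q : Q) : bool := (p, s, q) \in delta N.
Definition N_init (a : Sigma) (q : Q) : bool := q \in Init N a.

(* extended automaton: states option Q, None = q_box *)
Definition ext_delta (p s q : option Q) : bool :=
  match p, s, q with
  | Some p, Some s, Some q => (p, s, q) \in delta N
  | Some _, None, Some _ => true
  | _, _, _ => false
  end.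
Definition ext_init (x : option Sigma) (s : option Q) : bool :=
  match x, s with
  | None, None => true
  | Some a, Some q => q \in Init N a
  | _, _ => false
  end.

(* SIG of runs on a forest: (pre of first root, post of last root) *)
Definition forest_sigs (F : forest Sigma) (pq : Q * Q) : Prop :=
  exists g gs, is_run N_delta N_init F (g :: gs) /\
     pq = (tpre g, tpost (last g gs)).

(* SIG of runs on a context:
   ((pre of first root, post of last root), (pre of hole, post of hole)) *)
Definition ctx_sigs (C : ctx Sigma) (x : (Q * Q) * (Q * Q)) : Prop :=
  exists g gs, is_run ext_delta ext_init (ctx_forest C) (g :: gs) /\
    tpre g = Some x.1.1 /\ tpost (last g gs) = Some x.1.2 /\
    exists s, (None, (Some x.2.1, s, Some x.2.2)) \in
                      (flatten (map tnodes (g :: gs))).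
End Automaton.

Section TransAlg.
Variable Q : finType.
Definition idQ : {set Q * Q} := [set x | x.1 == x.2].
Definition idQ2 : {set (Q * Q) * (Q * Q)} := [set x | x.1 == x.2].
Definition fplus (F1 F2 : {set Q * Q}) : {set Q * Q} :=
  [set x | [exists q2, ((x.1, q2) \in F1) && ((q2, x.2) \in F2)]].
Definition cdot (C1 C2 : {set (Q * Q) * (Q * Q)}) : {set (Q * Q) * (Q * Q)} :=
  [set x | [exists m, ((x.1, m) \in C1) && ((m, x.2) \in C2)]].
Definition capply (C : {set (Q * Q) * (Q * Q)}) (F : {set Q * Q}) : {set Q * Q} :=
  [set x | [exists m, ((x, m) \in C) && (m \in F)]].
Definition fplusc (F : {set Q * Q}) (C : {set (Q * Q) * (Q * Q)})
  : {set (Q * Q) * (Q * Q)} :=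
  [set x | [exists q2, ((x.1.1, q2) \in F) && (((q2, x.1.2), x.2) \in C)]].
Definition cplusf (C : {set (Q * Q) * (Q * Q)}) (F : {set Q * Q})
  : {set (Q * Q) * (Q * Q)} :=
  [set x | [exists q2, (((x.1.1, q2), x.2) \in C) && ((q2, x.1.2) \in F)]].
End TransAlg.

Definition is_hom (Q Sigma : finType)
  (hF : forest Sigma -> {set Q * Q})
  (hC : ctx Sigma -> {set (Q * Q) * (Q * Q)}) : Prop :=
  hF [::] = idQ Q /\
  hC hole_ctx = idQ2 Q /\
  (forall F1 F2, hF (F1 ++ F2) = fplus (hF F1) (hF F2)) /\
  (forall C1 C2, hC (ccomp C1 C2) = cdot (hC C1) (hC C2)) /\
  (forall C F, hF (capp C F) = capply (hC C) (hF F)) /\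
  (forall F C, hC (fctx F C) = fplusc (hF F) (hC C)) /\
  (forall C F, hC (ctxf C F) = cplusf (hC C) (hF F)).

From mathcomp Require Import all_boot.
From Stdlib Require Import Setoid.
Set Implicit Arguments. Unset Strict Implicit. Unset Printing Implicit Defensive.

(* A run on a concatenation F1 F2 is a run on F1 followed by a run on F2 that
   starts in the state where the first one stops, and a run on a tree a(F) is a
   transition p -s-> q together with a run on F from a state of Init(a) to s.
   On signatures this says that the signature sets compose by [fplus], and that
   those of a(F) are obtained by applying the signature set of a_box to those
   of F; for contexts the same holds, the hole's transition being unconstrained
   and recorded separately. Every forest and context is built from the a_box by
   these operations, so induction on forests and contexts shows that h and the
   signature sets agree. *)

Section ForestInd.
Variables (A : Type) (P : forest A -> Prop).
Hypotheses (P_nil : P [::])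
  (P_cons : forall x ch rest, P ch -> P rest -> P (Node x ch :: rest)).

Fixpoint forest_cons_ind (t : tree A) : forall rest, P rest -> P (t :: rest) :=
  let: Node x ch := t in fun rest Prest =>
  P_cons x ((fix go (F : forest A) : P F :=
    if F is t' :: F' then forest_cons_ind t' (go F') else P_nil) ch) Prest.

Fixpoint forest_ind (F : forest A) : P F :=
  if F is t :: F' then @forest_cons_ind t F' (forest_ind F') else P_nil.
End ForestInd.

Definition forest_nodes (A : Type) (F : forest A) : seq A := flatten (map tnodes F).

Lemma forest_nodes1 (A : Type) (a : A) (H : forest A) :
  forest_nodes [:: Node a H] = a :: forest_nodes H.
Proof. by rewrite /forest_nodes /= cats0. Qed.

Lemma forest_nodes_cat (A : Type) (F1 F2 : forest A) :
  forest_nodes (F1 ++ F2) = forest_nodes F1 ++ forest_nodes F2.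
Proof. by rewrite /forest_nodes map_cat flatten_cat. Qed.

Lemma forest_nodes_map (A B : Type) (f : A -> B) (F : forest A) :
  forest_nodes (map (tmap f) F) = map f (forest_nodes F).
Proof.
rewrite /forest_nodes; elim/forest_ind: F => //= x ch rest IHch IHrest.
by rewrite IHch IHrest map_cat.
Qed.

Section RunSignatures.
Variables (X S : eqType) (dlt : S -> S -> S -> bool) (ini : X -> S -> bool).
Local Notation run := (seq (tree (X * (S * S * S)))).
Local Notation valid_tree := (valid_tree dlt ini).

Fixpoint chains (p : S) (G : run) (q : S) : Prop :=
  if G is g :: G' then p = tpre g /\ chains (tpost g) G' q else p = q.

Lemma chains_cat p G1 G2 r :
  chains p (G1 ++ G2) r <-> exists q, chains p G1 q /\ chains q G2 r.
Proof.
elim: G1 p => [|g G1 IH] p /=; first by split => [H|[q [-> H]]]; first exists p.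
rewrite IH; split => [[-> [q [H1 H2]]]|[q [[-> H1] H2]]]; first by exists q.
by split; last exists q.
Qed.

Lemma chains_sib_chain p g G q :
  chains p (g :: G) q <-> [/\ p = tpre g, sib_chain (g :: G) & tpost (last g G) = q].
Proof.
elim: G p g => [|h G IH] p g; first by split => [[-> <-]|[-> _ <-]].
rewrite /= -/(chains (tpost g) (h :: G) q) IH /sib_chain /=.
by split => [[-> [-> H ->]]|[-> /andP[/eqP -> H] ->]]; rewrite ?eqxx.
Qed.

Lemma valid_tree_dlt t : valid_tree t -> dlt (tpre t) (tself t) (tpost t).
Proof. by case: t => [[x [[p s] q]] ch] /= /andP[]. Qed.

Lemma valid_tree_node x p s q H :
  valid_tree (Node (x, (p, s, q)) H) <->
  [/\ dlt p s q, exists2 r, ini x r & chains r H s & all valid_tree H].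
Proof.
case: H => [|c H]; rewrite [valid_tree _]/=.
  split => [/and3P[D I _]|[D [r I Er] _]]; last by move: Er I => /= ->; rewrite D => ->.
  by split => //; exists s.
split => [/and5P[D /andP[I /eqP Es] C Vc V]|[D [r I /chains_sib_chain[<- C ->]] V]].
  split => //; last by rewrite /= Vc.
  by exists (tpre c) => //; apply/chains_sib_chain; split; rewrite ?Es.
by case/andP: V => Vc V; apply/and5P; split; rewrite ?I ?eqxx.
Qed.

Definition run_with_sig (F : forest X) (G : run) (p q : S) : Prop :=
  [/\ map (tmap fst) G = F, all valid_tree G & chains p G q].

(* Unlike [forest_sigs], this gives the empty forest the identity relation, as
   [is_hom] does; [run_sig_cat] then needs no nonemptiness side conditions. *)
Definition run_sig (F : forest X) (p q : S) : Prop := exists G, run_with_sig F G p q.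

Definition run_sig_at (z : X) (F : forest X) (p q u v : S) : Prop :=
  exists2 G, run_with_sig F G p q & exists s, (z, (u, s, v)) \in forest_nodes G.

Lemma run_with_sig_cons F g G p q :
  run_with_sig F (g :: G) p q <->
  is_run dlt ini F (g :: G) /\ tpre g = p /\ tpost (last g G) = q.
Proof.
split => [[M V /chains_sib_chain[<- C <-]]|[[M [C V]] [<- <-]]]; first by do !split.
by split => //; apply/chains_sib_chain.
Qed.

Lemma run_sigE F p q : F <> [::] ->
  run_sig F p q <->
  exists g G, is_run dlt ini F (g :: G) /\ (p, q) = (tpre g, tpost (last g G)).
Proof.
move=> F_nonempty; split.
  case=> -[|g G] H; first by case: H => /esym.
  by case/run_with_sig_cons: H => R [<- <-]; exists g, G.
by case=> g [G [R [-> ->]]]; exists (g :: G); apply/run_with_sig_cons.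
Qed.

Lemma run_sig_atE z F p q u v :
  run_sig_at z F p q u v <->
  exists g G, is_run dlt ini F (g :: G) /\ tpre g = p /\ tpost (last g G) = q /\
    exists s, (z, (u, s, v)) \in forest_nodes (g :: G).
Proof.
split; last first.
  by case=> g [G [R [Ep [Eq M]]]]; exists (g :: G) => //; apply/run_with_sig_cons.
case=> -[|g G] H [s M]; first by rewrite in_nil in M.
by case/run_with_sig_cons: H => R [Ep Eq]; exists g, G; do 3 split => //; exists s.
Qed.

Lemma run_sig_nil p q : run_sig [::] p q <-> p = q.
Proof. by split => [[[|g G] [] //]|->]; exists [::]. Qed.

Lemma run_with_sig_cat F1 F2 G p r :
  run_with_sig (F1 ++ F2) G p r <->
  exists G1 G2 q, [/\ G = G1 ++ G2, run_with_sig F1 G1 p q & run_with_sig F2 G2 q r].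
Proof.
split; last first.
  case=> G1 [G2 [q [-> [M1 V1 C1] [M2 V2 C2]]]].
  by split; [rewrite map_cat M1 M2 | rewrite all_cat V1 V2 | apply/chains_cat; exists q].
case=> M V C; exists (take (size F1) G), (drop (size F1) G).
move: V C; rewrite -{1 2}(cat_take_drop (size F1) G) all_cat chains_cat.
case/andP=> V1 V2 [q [C1 C2]]; exists q; split; rewrite ?cat_take_drop //.
  by split; rewrite // map_take M take_size_cat.
by split; rewrite // map_drop M drop_size_cat.
Qed.

Lemma run_sig_cat F1 F2 p r :
  run_sig (F1 ++ F2) p r <-> exists q, run_sig F1 p q /\ run_sig F2 q r.
Proof.
split => [[G /run_with_sig_cat[G1 [G2 [q [_ R1 R2]]]]]|[q [[G1 R1] [G2 R2]]]].
  by exists q; split; [exists G1 | exists G2].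
by exists (G1 ++ G2); apply/run_with_sig_cat; exists G1, G2, q.
Qed.

Lemma run_sig_at_cat z F1 F2 p r u v :
  run_sig_at z (F1 ++ F2) p r u v <->
  exists q, (run_sig F1 p q /\ run_sig_at z F2 q r u v) \/
            (run_sig_at z F1 p q u v /\ run_sig F2 q r).
Proof.
split.
  case=> G /run_with_sig_cat[G1 [G2 [q [-> R1 R2]]]] [s].
  rewrite forest_nodes_cat mem_cat => /orP[M|M]; exists q.
    by right; split; [exists G1 => //; exists s | exists G2].
  by left; split; [exists G1 | exists G2 => //; exists s].
case=> q [[[G1 R1] [G2 R2 [s M]]]|[[G1 R1 [s M]] [G2 R2]]];
  (exists (G1 ++ G2); first by apply/run_with_sig_cat; exists G1, G2, q);
  by exists s; rewrite forest_nodes_cat mem_cat M ?orbT.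
Qed.

Lemma run_sig_at_sig z F p q u v : run_sig_at z F p q u v -> run_sig F p q.
Proof. by case=> G R _; exists G. Qed.

Lemma run_sig_at_unmarked z F p q u v :
  z \notin forest_nodes F -> ~ run_sig_at z F p q u v.
Proof.
move=> /negP zF [G [MF _ _] [s M]]; apply: zF.
by rewrite -MF forest_nodes_map; apply/mapP; exists (z, (u, s, v)).
Qed.

Lemma run_with_sig_node x ch G p q :
  run_with_sig [:: Node x ch] G p q <->
  exists s r H, [/\ G = [:: Node (x, (p, s, q)) H], dlt p s q, ini x r
                  & run_with_sig ch H r s].
Proof.
split; last first.
  case=> s [r [H [-> D I [M V C]]]].
  split; [by rewrite /= M | rewrite /= andbT | by []].
  by apply/valid_tree_node; split => //; exists r.
case: G => [|[[y [[p' s] q']] H] [|g G]] [] //= [-> M].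
case/andP=> /valid_tree_node[D [r I C] V] _ [-> <-].
by exists s, r, H.
Qed.

Lemma run_sig_node x ch p q :
  run_sig [:: Node x ch] p q <->
  exists s r, [/\ dlt p s q, ini x r & run_sig ch r s].
Proof.
split => [[G /run_with_sig_node[s [r [H [_ D I R]]]]]|[s [r [D I [H R]]]]].
  by exists s, r; split => //; exists H.
by exists [:: Node (x, (p, s, q)) H]; apply/run_with_sig_node; exists s, r, H.
Qed.

Lemma run_sig_at_node z x ch p q u v : x != z ->
  run_sig_at z [:: Node x ch] p q u v <->
  exists s r, [/\ dlt p s q, ini x r & run_sig_at z ch r s u v].
Proof.
move=> xz; split.
  case=> G /run_with_sig_node[s [r [H [-> D I R]]]] [s'].
  rewrite forest_nodes1 in_cons => /orP[/eqP[zx _]|M]; first by rewrite zx eqxx in xz.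
  by exists s, r; split => //; exists H => //; exists s'.
case=> s [r [D I [H R [s' M]]]]; exists [:: Node (x, (p, s, q)) H].
  by apply/run_with_sig_node; exists s, r, H.
by exists s'; rewrite forest_nodes1 in_cons M orbT.
Qed.

Lemma run_sig_at_leaf z p q u v :
  run_sig_at z [:: Node z [::]] p q u v <->
  [/\ p = u, q = v & exists2 s, dlt p s q & ini z s].
Proof.
split.
  case=> G /run_with_sig_node[s [r [H [-> D I [M _ C]]]]] [s'].
  case: H M C => // _ /= Ers; rewrite forest_nodes1 mem_seq1 => /eqP[-> _ ->].
  by split => //; exists s => //; rewrite -Ers.
case=> <- <- [s D I]; exists [:: Node (z, (p, s, q)) [::]].
  by apply/run_with_sig_node; exists s, s, [::].
by exists s; rewrite forest_nodes1 mem_head.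
Qed.

Lemma run_sig_closed (P : pred S) F p q :
  (forall p s q, dlt p s q -> P q) -> run_sig F p q -> P p -> P q.
Proof.
move=> dltP [G [_ V C]]; elim: G p V C => [|g G IH] p /= V; first by move=> <-.
case/andP: V => Vg V [_ C] _.
exact: IH V C (dltP _ _ _ (valid_tree_dlt Vg)).
Qed.
End RunSignatures.

Section ExtendedAutomaton.
Variables (Q Sigma : finType) (N : nfta Q Sigma).
Local Notation run_sigN := (run_sig (N_delta N) (N_init N)).
Local Notation run_sig_ext := (run_sig (ext_delta N) (ext_init N)).
Local Notation run_sig_hole := (run_sig_at (ext_delta N) (ext_init N) None).

Lemma forest_sigsE F p q : F <> [::] -> forest_sigs N F (p, q) <-> run_sigN F p q.
Proof. by move=> F_nonempty; rewrite run_sigE. Qed.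

Lemma ctx_sigsE C p q u v :
  ctx_sigs N C ((p, q), (u, v)) <->
  run_sig_hole (ctx_forest C) (Some p) (Some q) (Some u) (Some v).
Proof. by rewrite run_sig_atE. Qed.

Lemma ext_delta_Some p s q : ext_delta N p s q -> isSome q.
Proof. by case: p s q => [?|] [?|] [?|]. Qed.

Lemma run_sig_ext_Some F p q : run_sig_ext F (Some p) q -> exists q', q = Some q'.
Proof.
move/(run_sig_closed (P := isSome) ext_delta_Some)/(_ isT).
by case: q => // q' _; exists q'.
Qed.

Lemma run_sig_ext_map F p q :
  run_sig_ext (map (tmap Some) F) (Some p) (Some q) <-> run_sigN F p q.
Proof.
elim/forest_ind: F p q => [|x ch rest IHch IHrest] p q.
  by rewrite !run_sig_nil; split => [[]|->].
have node p' q' :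
    run_sig_ext [:: tmap Some (Node x ch)] (Some p') (Some q') <->
    run_sigN [:: Node x ch] p' q'.
  rewrite /= !run_sig_node; split; last first.
    by case=> s [r [D I R]]; exists (Some s), (Some r); split => //; apply/IHch.
  case=> s [[r|] [D I R]] //; case/run_sig_ext_Some: (R) => s' Es; subst s.
  by exists s', r; split => //; apply/IHch.
rewrite -cat1s map_cat !run_sig_cat; split; last first.
  by case=> m [Hx Hrest]; exists (Some m); split; [apply/node | apply/IHrest].
case=> m [Hx Hrest]; case/run_sig_ext_Some: (Hx) => m' Em; subst m.
by exists m'; split; [apply/node | apply/IHrest].
Qed.

Lemma None_notin_forest_nodes_map (F : forest Sigma) :
  None \notin forest_nodes (map (tmap Some) F).
Proof. by rewrite forest_nodes_map; apply/mapP => -[]. Qed.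

Lemma run_sig_hole_catl L B p r u v :
  run_sig_hole (map (tmap Some) L ++ B) (Some p) r u v <->
  exists m, run_sigN L p m /\ run_sig_hole B (Some m) r u v.
Proof.
rewrite run_sig_at_cat; split; last first.
  by case=> m [HL HB]; exists (Some m); left; split => //; apply/run_sig_ext_map.
case=> m [[HL HB]|[HL _]].
  2: by case: (run_sig_at_unmarked (None_notin_forest_nodes_map L) HL).
case/run_sig_ext_Some: (HL) => m' Em; subst m.
by exists m'; split => //; apply/run_sig_ext_map.
Qed.

Lemma run_sig_hole_catr B R p q u v :
  run_sig_hole (B ++ map (tmap Some) R) (Some p) (Some q) u v <->
  exists m, run_sig_hole B (Some p) (Some m) u v /\ run_sigN R m q.
Proof.
rewrite run_sig_at_cat; split; last first.
  by case=> m [HB HR]; exists (Some m); right; split => //; apply/run_sig_ext_map.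
case=> m [[_ HR]|[HB HR]].
  by case: (run_sig_at_unmarked (None_notin_forest_nodes_map R) HR).
case/run_sig_at_sig/run_sig_ext_Some: (HB) => m' Em; subst m.
by exists m'; split => //; apply/run_sig_ext_map.
Qed.

Lemma ctx_sigs_a_box a p q u v :
  ctx_sigs N (a_box a) ((p, q), (u, v)) <-> (p, v, q) \in delta N /\ u \in Init N a.
Proof.
rewrite ctx_sigsE /= run_sig_at_node //; split.
  by case=> s [r [D I /run_sig_at_leaf[Er Es _]]]; subst r s.
case=> D I; exists (Some v), (Some u); split => //.
by apply/run_sig_at_leaf; split => //; exists None.
Qed.
End ExtendedAutomaton.

Section TransitionAlgebra.
Variable Q : finType.
Implicit Types (A B : {set Q * Q}) (C D : {set (Q * Q) * (Q * Q)}).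

Lemma existsP_and (T : finType) (a b : pred T) :
  [exists m, a m && b m] <-> exists m, a m /\ b m.
Proof.
split => [/existsP[m /andP[]]|[m [am bm]]]; first by exists m.
by apply/existsP; exists m; rewrite am bm.
Qed.

Lemma mem_fplus A B p r : (p, r) \in fplus A B <-> exists q, (p, q) \in A /\ (q, r) \in B.
Proof. by rewrite inE; apply: existsP_and. Qed.

Lemma mem_capply C A x : x \in capply C A <-> exists m, (x, m) \in C /\ m \in A.
Proof. by rewrite inE; apply: existsP_and. Qed.

Lemma mem_cdot C D x y : (x, y) \in cdot C D <-> exists m, (x, m) \in C /\ (m, y) \in D.
Proof. by rewrite inE; apply: existsP_and. Qed.

Lemma mem_fplusc A C p q y :
  ((p, q), y) \in fplusc A C <-> exists m, (p, m) \in A /\ ((m, q), y) \in C.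
Proof. by rewrite inE; apply: existsP_and. Qed.

Lemma mem_cplusf C A p q y :
  ((p, q), y) \in cplusf C A <-> exists m, ((p, m), y) \in C /\ (m, q) \in A.
Proof. by rewrite inE; apply: existsP_and. Qed.
End TransitionAlgebra.

Scheme ctx_ctree_ind := Induction for ctx Sort Prop
  with ctree_ctx_ind := Induction for ctree Sort Prop.

Section Homomorphism.
Variables (Q Sigma : finType) (N : nfta Q Sigma).
Variables (hF : forest Sigma -> {set Q * Q}) (hC : ctx Sigma -> {set (Q * Q) * (Q * Q)}).
Hypothesis hom : is_hom hF hC.
Hypothesis hC_a_box : forall a x, x \in hC (a_box a) <-> ctx_sigs N (a_box a) x.
Local Notation run_sigN := (run_sig (N_delta N) (N_init N)).
Local Notation run_sig_hole := (run_sig_at (ext_delta N) (ext_init N) None).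

Lemma mem_hC_a_box a p q u v :
  ((p, q), (u, v)) \in hC (a_box a) <-> (p, v, q) \in delta N /\ u \in Init N a.
Proof. by rewrite hC_a_box ctx_sigs_a_box. Qed.

Lemma mem_hF F p q : (p, q) \in hF F <-> run_sigN F p q.
Proof.
have [hF_nil [_ [hF_cat [_ [hF_capp _]]]]] := hom.
elim/forest_ind: F p q => [|x ch rest IHch IHrest] p q.
  by rewrite hF_nil inE run_sig_nil; split => /eqP.
have node p' q' : (p', q') \in hF [:: Node x ch] <-> run_sigN [:: Node x ch] p' q'.
  have <- : capp (a_box x) ch = [:: Node x ch] by rewrite /= cats0.
  rewrite hF_capp mem_capply /= cats0 run_sig_node; split.
    by case=> -[r s] [/mem_hC_a_box[D I] R]; exists s, r; split => //; apply/IHch.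
  by case=> s [r [D I R]]; exists (r, s); split; [apply/mem_hC_a_box | apply/IHch].
rewrite -cat1s hF_cat mem_fplus run_sig_cat.
by split => -[m [/node Hx /IHrest Hrest]]; exists m.
Qed.

Lemma mem_hC C p q u v :
  ((p, q), (u, v)) \in hC C <->
  run_sig_hole (ctx_forest C) (Some p) (Some q) (Some u) (Some v).
Proof.
have [_ [hC_hole [_ [hC_ccomp [_ [hC_fctx hC_ctxf]]]]]] := hom.
move: C p q u v; apply: (ctx_ctree_ind (P0 := fun t => forall p q u v,
  ((p, q), (u, v)) \in hC (Ctx [::] t [::]) <->
  run_sig_hole (ctree_forest t) (Some p) (Some q) (Some u) (Some v))).
- move=> L t IHt R p q u v.
  have -> : Ctx L t R = ctxf (fctx L (Ctx [::] t [::])) R by rewrite /= cats0.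
  rewrite hC_ctxf hC_fctx mem_cplusf /= cats0 run_sig_hole_catl; split.
    case=> m2 [/mem_fplusc[m1 [HL Ht]] HR]; exists m1; split; first exact/mem_hF.
    by apply/run_sig_hole_catr; exists m2; split; [apply/IHt | apply/mem_hF].
  case=> m1 [HL /run_sig_hole_catr[m2 [Ht HR]]]; exists m2; split; last exact/mem_hF.
  by apply/mem_fplusc; exists m1; split; [apply/mem_hF | apply/IHt].
- move=> p q u v; rewrite -[Ctx _ _ _]/hole_ctx hC_hole inE /= run_sig_at_leaf.
  split => [/eqP[-> ->]|[[->] [->] _]] //.
  by split => //; exists None.
- move=> a C IHC p q u v.
  have -> : Ctx [::] (CNode a C) [::] = ccomp (a_box a) C.
    by case: C {IHC} => L t R /=; rewrite cats0.
  rewrite hC_ccomp mem_cdot /= run_sig_at_node //; split.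
    case=> -[r s] [/mem_hC_a_box[D I] H].
    by exists (Some s), (Some r); split => //; apply/IHC.
  case=> s [[r|] [D I H]] //; case/run_sig_at_sig/run_sig_ext_Some: (H) => s' Es; subst s.
  by exists (r, s'); split; [apply/mem_hC_a_box | apply/IHC].
Qed.
End Homomorphism.

Theorem lemma4p5 (Q Sigma : finType) (N : nfta Q Sigma)
  (hF : forest Sigma -> {set Q * Q})
  (hC : ctx Sigma -> {set (Q * Q) * (Q * Q)}) :
  is_hom hF hC ->
  (forall (a : Sigma) x, x \in hC (a_box a) <-> ctx_sigs N (a_box a) x) ->
  (forall F : forest Sigma, F <> [::] ->
     forall x, x \in hF F <-> forest_sigs N F x) /\
  (forall C : ctx Sigma, forall x, x \in hC C <-> ctx_sigs N C x).
Proof.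
move=> hom hC_a_box; split.
  by move=> F F_nonempty [p q]; rewrite forest_sigsE // (mem_hF hom hC_a_box).
by move=> C [[p q] [u v]]; rewrite ctx_sigsE (mem_hC hom hC_a_box).
Qed.
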